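(* If $x_1:A_1,\dots,x_k:A_k\vdash t:A$ is derivable in $\mathbf{IL}_{\mathbf{at}}$, then the term $t$ of $A$ from $x_1:A_1,\dots,x_k:A_k$ is valid in every phase model $(D_{\mathcal M},* )$; that is, for all $(m_i\rhd t_i)\in A_i^*$ ($1\le i\le k$) we have $(m_1\cdots m_k\rhd t[x_1:=t_1,\dots,x_k:=t_k])\in A^*$.
   Context: System $\mathbf{IL}_{\mathbf{at}}$: formulas $A ::= X\mid A\to B\mid \forall X.A$ ($X$ atoms); terms $t ::= x\mid c^A\mid\lambda x.t\mid ts\mid\Lambda X.t\mid tX$ (a term-constant $c^A$ for each formula $A$; $tX$ only with $X$ an atom). $\Gamma\vdash t:A$ is derivable by: $\Gamma,x:A\vdash x:A$; $\Gamma\vdash c^A:A$; from $\Gamma,x:A\vdash t:B$ infer $\Gamma\vdash\lambda x.t:A\to B$; from $\Gamma\vdash t:A\to B$, $\Gamma\vdash s:A$ infer $\Gamma\vdash ts:B$; from $\Gamma\vdash t:A$ with $X$ not free in the formulas of $\Gamma$ infer $\Gamma\vdash\Lambda X.t:\forall X.A$; from $\Gamma\vdash t:\forall X.A$ infer $\Gamma\vdash tY:A[X:=Y]$ ($Y$ an atom). Substitutions are capture-avoiding. Phase space: an idempotent commutative monoid $\mathcal M=(M,\cdot,\varepsilon)$ ($m\cdot m=m$); domain $B_{\mathcal M}=\{(m\rhd t)\mid m\in M,\ t\text{ a term}\}$; $D_{\mathcal M}$ is the set of closed sets, i.e. subsets $\alpha\subseteq B_{\mathcal M}$ such that (Monotonicity)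 $(m\rhd t)\in\alpha$ implies $(m\cdot n\rhd t)\in\alpha$ for all $n\in M$, and (Expansion) for $T_1,\dots,T_k$ terms or atoms: (i) $(m\rhd t[x:=s]T_1\cdots T_k)\in\alpha$ implies $(m\rhd(\lambda x.t)sT_1\cdots T_k)\in\alpha$; (ii) $(m\rhd t[X:=Y]T_1\cdots T_k)\in\alpha$ implies $(m\rhd(\Lambda X.t)YT_1\cdots T_k)\in\alpha$. Phase model $(D_{\mathcal M},* )$: a phase space with an interpretation such that $X^*\in D_{\mathcal M}$ for every atom $X$; $(A\to B)^*=\{(m\rhd t)\mid (m\cdot n\rhd ts)\in B^*\text{ for all }(n\rhd s)\in A^*\}$; $(\forall X.A)^*=\{(m\rhd t)\mid (m\rhd tY)\in(A[X:=Y])^*\text{ for every atom }Y\}$; and $(\varepsilon\rhd c^A)\in A^*$ for every formula $A$. *)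

(* Syntax of IL_at in pure de Bruijn style (both term variables
   and atoms), which represents terms/formulas up to alpha-equivalence and
   makes all substitutions capture-avoiding by construction. *)
From Stdlib Require Import List.
Import ListNotations.

Definition scons {X : Type} (x : X) (f : nat -> X) : nat -> X :=
  fun n => match n with 0 => x | S k => f k end.

(** Formulas  A ::= X | A -> B | forall X. A
    Atoms are de Bruijn indices; a free index n denotes the (free) atom n. *)
Inductive form : Type :=
| Atom (X : nat)
| Imp (A B : form)
| All (A : form).

Definition upren (r : nat -> nat) : nat -> nat := scons 0 (fun k => S (r k)).

(* renaming of atoms (atoms are only ever replaced by atoms) *)
Fixpoint frename (r : nat -> nat) (A : form) : form :=
  match A with
  | Atom X => Atom (r X)
  | Imp A B => Imp (frename r A) (frename r B)
  | All A => All (frename (upren r) A)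
  end.

(* A[X:=Y] where X is the atom bound by the outer forall (index 0) *)
Definition fsubst1 (A : form) (Y : nat) : form := frename (scons Y (fun k => k)) A.

Inductive term : Type :=
| Var (x : nat)
| Cst (A : form)
| Lam (t : term)
| App (t s : term)
| TLam (t : term)
| TApp (t : term) (Y : nat).

Fixpoint trename (r : nat -> nat) (t : term) : term :=
  match t with
  | Var x => Var x
  | Cst A => Cst (frename r A)
  | Lam t => Lam (trename r t)
  | App t s => App (trename r t) (trename r s)
  | TLam t => TLam (trename (upren r) t)
  | TApp t Y => TApp (trename r t) (r Y)
  end.

Fixpoint vrename (r : nat -> nat) (t : term) : term :=
  match t with
  | Var x => Var (r x)
  | Cst A => Cst A
  | Lam t => Lam (vrename (upren r) t)
  | App t s => App (vrename r t) (vrename r s)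
  | TLam t => TLam (vrename r t)
  | TApp t Y => TApp (vrename r t) Y
  end.

Fixpoint subst (sg : nat -> term) (t : term) : term :=
  match t with
  | Var x => sg x
  | Cst A => Cst A
  | Lam t => Lam (subst (scons (Var 0) (fun k => vrename S (sg k))) t)
  | App t s => App (subst sg t) (subst sg s)
  | TLam t => TLam (subst (fun k => trename S (sg k)) t)
  | TApp t Y => TApp (subst sg t) Y
  end.

(* t[x:=s], x the variable bound by the outer lambda *)
Definition subst1 (t s : term) : term := subst (scons s Var) t.
(* t[X:=Y], X the atom bound by the outer Lambda *)
Definition tsubst1 (t : term) (Y : nat) : term := trename (scons Y (fun k => k)) t.

(** Typing of IL_at. A context x_1:A_1,...,x_k:A_k is a list of formulas;
    the variable Var i has the i-th formula of the list. *)
Inductive typed : list form -> term -> form -> Prop :=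
| ty_var : forall G i, i < length G -> typed G (Var i) (nth i G (Atom 0))
| ty_cst : forall G A, typed G (Cst A) A
| ty_lam : forall G t A B, typed (A :: G) t B -> typed G (Lam t) (Imp A B)
| ty_app : forall G t s A B, typed G t (Imp A B) -> typed G s A -> typed G (App t s) B
| ty_tlam : forall G t A,
    (* X (index 0) is fresh for the shifted context: "X not free in Gamma" *)
    typed (map (frename S) G) t A -> typed G (TLam t) (All A)
| ty_tapp : forall G t A Y, typed G t (All A) -> typed G (TApp t Y) (fsubst1 A Y).

Record ICMonoid : Type := {
  carrier :> Type;
  mop : carrier -> carrier -> carrier;
  munit : carrier;
  mop_assoc : forall a b c, mop a (mop b c) = mop (mop a b) c;
  mop_comm : forall a b, mop a b = mop b a;
  mop_unit : forall a, mop munit a = a;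
  mop_idem : forall a, mop a a = a
}.

Fixpoint mprod (M : ICMonoid) (m : nat -> carrier M) (k : nat) : carrier M :=
  match k with
  | 0 => munit M
  | S k => mop M (mprod M m k) (m k)
  end.

Inductive arg : Type := ATerm (s : term) | AAtom (Y : nat).

Definition app_arg (t : term) (a : arg) : term :=
  match a with ATerm s => App t s | AAtom Y => TApp t Y end.

Definition apps (t : term) (l : list arg) : term := fold_left app_arg l t.

(* subsets of B_M = { (m |> t) } *)
Definition phase_set (M : ICMonoid) := carrier M -> term -> Prop.

(* closed sets, i.e. elements of D_M *)
Definition closed_set (M : ICMonoid) (al : phase_set M) : Prop :=
  (forall m t n, al m t -> al (mop M m n) t) /\
  (forall m t s l, al m (apps (subst1 t s) l) -> al m (apps (App (Lam t) s) l)) /\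
  (forall m t Y l, al m (apps (tsubst1 t Y) l) -> al m (apps (TApp (TLam t) Y) l)).

Definition phase_model (M : ICMonoid) (star : form -> phase_set M) : Prop :=
  (forall X, closed_set M (star (Atom X))) /\
  (forall A B m t, star (Imp A B) m t <->
      (forall n s, star A n s -> star B (mop M m n) (App t s))) /\
  (forall A m t, star (All A) m t <->
      (forall Y, star (fsubst1 A Y) m (TApp t Y))) /\
  (forall A, star A (munit M) (Cst A)).

(* Every interpretation A^* is a closed set: the arrow and the atomic
   quantifier preserve monotonicity and expansion, because expansion is
   required under arbitrary trailing arguments.  Then, by
   induction on the derivation, variables are handled by monotonicity (the
   product of the context contains m_i), lambda and Lambda by expansion, and
   application by idempotence, which merges the two copies of the context
   product. *)
From Stdlib Require Import List Lia.
Import ListNotations.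

Lemma frename_ext A : forall r r', (forall x, r x = r' x) -> frename r A = frename r' A.
Proof.
  induction A; simpl; intros r r' H; f_equal; auto.
  apply IHA; intros [|x]; cbn; congruence.
Qed.

Lemma frename_comp A : forall r r', frename r (frename r' A) = frename (fun x => r (r' x)) A.
Proof.
  induction A; simpl; intros; f_equal; auto.
  rewrite IHA; apply frename_ext; intros [|x]; reflexivity.
Qed.

Lemma frename_id A : forall r, (forall x, r x = x) -> frename r A = A.
Proof.
  induction A; simpl; intros r H; f_equal; auto.
  apply IHA; intros [|x]; cbn; congruence.
Qed.

Lemma fsubst1_up r A Y : fsubst1 (frename (upren r) A) Y = frename (scons Y r) A.
Proof.
  unfold fsubst1; rewrite frename_comp; apply frename_ext; intros [|x]; reflexivity.
Qed.

Lemma frename_fsubst1 r A Y : frename r (fsubst1 A Y) = fsubst1 (frename (upren r) A) (r Y).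
Proof.
  unfold fsubst1; rewrite !frename_comp; apply frename_ext; intros [|x]; reflexivity.
Qed.

Lemma trename_ext t : forall r r', (forall x, r x = r' x) -> trename r t = trename r' t.
Proof.
  induction t; simpl; intros r r' H; f_equal; auto using frename_ext.
  apply IHt; intros [|x]; cbn; congruence.
Qed.

Lemma trename_comp t : forall r r', trename r (trename r' t) = trename (fun x => r (r' x)) t.
Proof.
  induction t; simpl; intros; f_equal; auto using frename_comp.
  rewrite IHt; apply trename_ext; intros [|x]; reflexivity.
Qed.

Lemma trename_id t : forall r, (forall x, r x = x) -> trename r t = t.
Proof.
  induction t; simpl; intros r H; f_equal; auto using frename_id.
  apply IHt; intros [|x]; cbn; congruence.
Qed.

Lemma vrename_ext t : forall r r', (forall x, r x = r' x) -> vrename r t = vrename r' t.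
Proof.
  induction t; simpl; intros r r' H; f_equal; auto.
  apply IHt; intros [|x]; cbn; congruence.
Qed.

Lemma vrename_comp t : forall r r', vrename r (vrename r' t) = vrename (fun x => r (r' x)) t.
Proof.
  induction t; simpl; intros; f_equal; auto.
  rewrite IHt; apply vrename_ext; intros [|x]; reflexivity.
Qed.

Lemma trename_vrename t : forall r p, trename r (vrename p t) = vrename p (trename r t).
Proof. induction t; simpl; intros; f_equal; auto. Qed.

Lemma subst_ext t : forall sg sg', (forall x, sg x = sg' x) -> subst sg t = subst sg' t.
Proof.
  induction t; simpl; intros sg sg' H; f_equal; auto.
  - apply IHt; intros [|x]; cbn; congruence.
  - apply IHt; intros x; cbn; congruence.
Qed.

Lemma subst_id t : forall sg, (forall x, sg x = Var x) -> subst sg t = t.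
Proof.
  induction t; simpl; intros sg H; f_equal; auto.
  - apply IHt; intros [|x]; cbn; rewrite ?H; reflexivity.
  - apply IHt; intros x; cbn; rewrite H; reflexivity.
Qed.

Lemma trename_subst t : forall r sg,
  trename r (subst sg t) = subst (fun k => trename r (sg k)) (trename r t).
Proof.
  induction t; simpl; intros; f_equal; auto.
  - rewrite IHt; apply subst_ext; intros [|x]; cbn; auto using trename_vrename.
  - rewrite IHt; apply subst_ext; intros x; cbn.
    rewrite !trename_comp; apply trename_ext; reflexivity.
Qed.

Lemma subst_vrename t : forall r sg, subst sg (vrename r t) = subst (fun k => sg (r k)) t.
Proof.
  induction t; simpl; intros; f_equal; auto.
  - rewrite IHt; apply subst_ext; intros [|x]; reflexivity.
  - rewrite IHt; reflexivity.
Qed.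

Lemma vrename_subst t : forall r sg, vrename r (subst sg t) = subst (fun k => vrename r (sg k)) t.
Proof.
  induction t; simpl; intros; f_equal; auto.
  - rewrite IHt; apply subst_ext; intros [|x]; cbn; auto.
    rewrite !vrename_comp; apply vrename_ext; reflexivity.
  - rewrite IHt; apply subst_ext; intros x; cbn.
    symmetry; apply trename_vrename.
Qed.

Lemma subst_comp t : forall sg1 sg2,
  subst sg2 (subst sg1 t) = subst (fun k => subst sg2 (sg1 k)) t.
Proof.
  induction t; simpl; intros; f_equal; auto.
  - rewrite IHt; apply subst_ext; intros [|x]; cbn; auto.
    rewrite subst_vrename, vrename_subst; apply subst_ext; reflexivity.
  - rewrite IHt; apply subst_ext; intros x; cbn.
    symmetry; apply trename_subst.
Qed.

Lemma subst1_up t s sg :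
  subst1 (subst (scons (Var 0) (fun k => vrename S (sg k))) t) s = subst (scons s sg) t.
Proof.
  unfold subst1; rewrite subst_comp; apply subst_ext; intros [|x]; cbn; auto.
  rewrite subst_vrename; apply subst_id; reflexivity.
Qed.

Lemma tsubst1_up t r sg Y :
  tsubst1 (subst (fun k => trename S (sg k)) (trename (upren r) t)) Y
  = subst sg (trename (scons Y r) t).
Proof.
  unfold tsubst1; rewrite trename_subst, trename_comp.
  rewrite (trename_ext t _ (scons Y r)) by (intros [|x]; reflexivity).
  apply subst_ext; intros x; rewrite trename_comp; apply trename_id; reflexivity.
Qed.

Lemma apps_snoc_term t l s : apps t (l ++ [ATerm s]) = App (apps t l) s.
Proof. unfold apps; rewrite fold_left_app; reflexivity. Qed.

Lemma apps_snoc_atom t l Y : apps t (l ++ [AAtom Y]) = TApp (apps t l) Y.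
Proof. unfold apps; rewrite fold_left_app; reflexivity. Qed.

Section PhaseSpace.
Variable M : ICMonoid.

Definition imp_set (al be : phase_set M) : phase_set M :=
  fun m t => forall n s, al n s -> be (mop M m n) (App t s).

Definition all_set (F : nat -> phase_set M) : phase_set M :=
  fun m t => forall Y, F Y m (TApp t Y).

Lemma closed_set_ext (al be : phase_set M) :
  (forall m t, al m t <-> be m t) -> closed_set M al -> closed_set M be.
Proof.
  intros E [Hmono [Hbeta Htbeta]]; split; [|split]; intros *; rewrite <- !E; auto.
Qed.

Lemma closed_imp_set (al be : phase_set M) : closed_set M be -> closed_set M (imp_set al be).
Proof.
  intros [Hmono [Hbeta Htbeta]]; split; [|split]; intros * H n s' Hs'.
  - rewrite <- mop_assoc, (mop_comm M _ n), mop_assoc; apply Hmono, H, Hs'.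
  - rewrite <- apps_snoc_term; apply Hbeta; rewrite apps_snoc_term; apply H, Hs'.
  - rewrite <- apps_snoc_term; apply Htbeta; rewrite apps_snoc_term; apply H, Hs'.
Qed.

Lemma closed_all_set (F : nat -> phase_set M) :
  (forall Y, closed_set M (F Y)) -> closed_set M (all_set F).
Proof.
  intros HF; split; [|split]; intros * H Y'; destruct (HF Y') as [Hmono [Hbeta Htbeta]].
  - apply Hmono, H.
  - rewrite <- apps_snoc_atom; apply Hbeta; rewrite apps_snoc_atom; apply H.
  - rewrite <- apps_snoc_atom; apply Htbeta; rewrite apps_snoc_atom; apply H.
Qed.

Lemma mprod_scons (n : carrier M) m k : mprod M (scons n m) (S k) = mop M n (mprod M m k).
Proof.
  induction k; simpl in *.
  - rewrite mop_unit, mop_comm, mop_unit; reflexivity.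
  - rewrite IHk, mop_assoc; reflexivity.
Qed.

Lemma mprod_factor m k i : i < k -> exists c, mprod M m k = mop M (m i) c.
Proof.
  induction k; intros Hi; simpl; [lia|].
  destruct (PeanoNat.Nat.eq_dec i k) as [->|Hne].
  - exists (mprod M m k); apply mop_comm.
  - destruct IHk as [c ->]; [lia|].
    exists (mop M c (m k)); symmetry; apply mop_assoc.
Qed.

End PhaseSpace.

Section Soundness.
Variable M : ICMonoid.
Variable star : form -> phase_set M.
Hypothesis HM : phase_model M star.

Lemma closed_star_frename A : forall r, closed_set M (star (frename r A)).
Proof.
  destruct HM as [Hatom [Himp [Hall _]]].
  induction A as [X|A _ B IHB|A IHA]; intros r; simpl.
  - apply Hatom.
  - apply (closed_set_ext M (imp_set M (star (frename r A)) (star (frename r B)))).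
    + intros; symmetry; apply Himp.
    + apply closed_imp_set, IHB.
  - apply (closed_set_ext M (all_set M (fun Y => star (fsubst1 (frename (upren r) A) Y)))).
    + intros; symmetry; apply Hall.
    + apply closed_all_set; intros Y; rewrite fsubst1_up; apply IHA.
Qed.

Lemma closed_star A : closed_set M (star A).
Proof. rewrite <- (frename_id A (fun x => x)) by reflexivity; apply closed_star_frename. Qed.

Lemma star_mono A m t n : star A m t -> star A (mop M m n) t.
Proof. apply (closed_star A). Qed.

Lemma star_beta A m t s : star A m (subst1 t s) -> star A m (App (Lam t) s).
Proof. apply ((proj1 (proj2 (closed_star A))) m t s []). Qed.

Lemma star_tbeta A m t Y : star A m (tsubst1 t Y) -> star A m (TApp (TLam t) Y).
Proof. apply ((proj2 (proj2 (closed_star A))) m t Y []). Qed.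

(* The invariant is stated under an arbitrary renaming [r] of atoms: the
   Lambda-rule instantiates its bound atom by every atom [Y], so its premise is
   used under the renaming [scons Y r]. *)
Lemma sound_frename G t A : typed G t A ->
  forall r m sg,
    (forall i, i < length G -> star (frename r (nth i G (Atom 0))) (m i) (sg i)) ->
    star (frename r A) (mprod M m (length G)) (subst sg (trename r t)).
Proof.
  destruct HM as [_ [Himp [Hall Hcst]]].
  induction 1 as [G i Hi|G A|G t A B _ IH|G t s A B _ IHt _ IHs|G t A _ IH|G t A Y _ IH];
    intros r m sg Hsg; simpl.
  - destruct (mprod_factor M m (length G) i Hi) as [c ->].
    apply star_mono, Hsg, Hi.
  - rewrite <- (mop_unit M (mprod M m (length G))); apply star_mono, Hcst.
  - apply Himp; intros n s Hs; apply star_beta.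
    rewrite subst1_up, mop_comm, <- mprod_scons.
    apply (IH r (scons n m) (scons s sg)).
    intros [|i] Hi; [exact Hs|]; apply Hsg; simpl in Hi; lia.
  - rewrite <- (mop_idem M (mprod M m (length G))).
    apply (proj1 (Himp _ _ _ _) (IHt r m sg Hsg)), IHs, Hsg.
  - apply Hall; intros Y; apply star_tbeta.
    rewrite fsubst1_up, tsubst1_up, <- (length_map (frename S) G).
    apply IH; intros i Hi; rewrite length_map in Hi.
    rewrite (nth_indep _ _ (frename S (Atom 0))), map_nth, frename_comp
      by (rewrite length_map; exact Hi).
    apply Hsg, Hi.
  - rewrite frename_fsubst1; apply (proj1 (Hall _ _ _) (IH r m sg Hsg)).
Qed.

End Soundness.

Theorem mainTheorem4 (G : list form) (t : term) (A : form) :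
  typed G t A ->
  forall (M : ICMonoid) (star : form -> phase_set M),
    phase_model M star ->
    forall (m : nat -> carrier M) (sg : nat -> term),
      (forall i, i < length G -> star (nth i G (Atom 0)) (m i) (sg i)) ->
      star A (mprod M m (length G)) (subst sg t).
Proof.
  intros Hty M star HM m sg Hsg.
  rewrite <- (frename_id A (fun x => x)), <- (trename_id t (fun x => x)) by reflexivity.
  apply (sound_frename M star HM G t A Hty); intros i Hi.
  rewrite frename_id by reflexivity; apply Hsg, Hi.
Qed.
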